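(* If a tiling $T$ contains a triple $ijk$ (with $i<j<k$), then $T$ contains a dense triple $(\ell-1)\,\ell\,(\ell+1)$ for some $\ell$ with $i<\ell<k$.
   Context: Fix an integer $n\ge 3$ and write $[n]=\{1,\dots,n\}$. Let $\Lambda$ be the set of 3-element subsets of $[n]$; a triple $\{i,j,k\}$ with $i<j<k$ is written $ijk$. For a 4-element subset $F=\{i<j<k<l\}$ of $[n]$, the stick of $F$ is the sequence $(ijk,\ ijl,\ ikl,\ jkl)$. A tiling (the inversion set of a rhombus tiling of the zonogon $Z(n;2)$) is a subset $T\subseteq\Lambda$ such that for every 4-element $F\subseteq[n]$, $T\cap\mathrm{stick}(F)$ is an initial segment or a final segment of the stick (empty set and whole stick allowed). *)

From mathcomp Require Import all_boot.
Set Implicit Arguments. Unset Strict Implicit. Unset Printing Implicit Defensive.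

(* A subset of Lambda = 3-subsets of [n] is encoded by its characteristic
   function on increasing triples: T i j k (meaningful for 1 <= i < j < k <= n). *)
Definition triple_set := nat -> nat -> nat -> bool.

Definition in_Lambda (n : nat) (T : triple_set) : Prop :=
  forall i j k, T i j k -> [/\ 1 <= i, i < j, j < k & k <= n].

Definition stick (i j k l : nat) : seq (nat * nat * nat) :=
  [:: (i, j, k); (i, j, l); (i, k, l); (j, k, l)].

Definition pattern (T : triple_set) (s : seq (nat * nat * nat)) : seq bool :=
  [seq T t.1.1 t.1.2 t.2 | t <- s].

(* a subset of s is an initial segment iff its pattern is
   true...true false...false; a final segment iff false...false true...true *)
Definition initial_segment (b : seq bool) : Prop :=
  exists m, b = nseq m true ++ nseq (size b - m) false.
Definition final_segment (b : seq bool) : Prop :=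
  exists m, b = nseq m false ++ nseq (size b - m) true.

Definition tiling (n : nat) (T : triple_set) : Prop :=
  in_Lambda n T /\
  forall i j k l, 1 <= i -> i < j -> j < k -> k < l -> l <= n ->
    initial_segment (pattern T (stick i j k l)) \/
    final_segment (pattern T (stick i j k l)).

From mathcomp Require Import all_boot.
From mathcomp Require Import zify.

Set Implicit Arguments.
Unset Strict Implicit.
Unset Printing Implicit Defensive.

(* If [i < j] are not consecutive, the stick of [{i, i+1, j, k}] has [ijk] in
   an inner position, so [T] also contains one of its end triples
   [i (i+1) j] or [(i+1) j k]; symmetrically with [{i, j, j+1, k}] if [j < k]
   are not consecutive.  Either way [T] contains a triple spanning a strictly
   smaller interval inside [[i, k]], and the descent stops at a dense triple. *)

Lemma initial_segment_nth (b : seq bool) p q :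
  initial_segment b -> q <= p -> nth false b p -> nth false b q.
Proof.
case=> m ->; rewrite !nth_cat !size_nseq !nth_nseq.
by case: (ltnP p m); case: (ltnP q m) => //; case: ifP => //; lia.
Qed.

Lemma final_segment_nth (b : seq bool) p q :
  final_segment b -> p <= q -> q < size b -> nth false b p -> nth false b q.
Proof.
case=> m bE; rewrite bE size_cat !size_nseq !nth_cat !size_nseq !nth_nseq.
by case: (ltnP p m); case: (ltnP q m) => //; repeat case: ifP => //; lia.
Qed.

Section Tiling.

Variables (n : nat) (T : triple_set).
Hypothesis tilingT : tiling n T.

Lemma tiling_stick_end i j k l :
  1 <= i -> i < j -> j < k -> k < l -> l <= n ->
  T i j l || T i k l -> T i j k || T j k l.
Proof.
move=> hi hij hjk hkl hl inner.
have [p [p_lt3 Tp]] :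
    exists p, p < 3 /\ nth false (pattern T (stick i j k l)) p.
  by case/orP: inner => Tinner; [exists 1 | exists 2].
have [init | final] := tilingT.2 i j k l hi hij hjk hkl hl.
  by have /= -> := initial_segment_nth init (leq0n p) Tp.
by have /= -> := final_segment_nth final (ltnW p_lt3) (ltnSn 3) Tp; rewrite orbT.
Qed.

Lemma tiling_narrow i j k :
  T i j k -> i.+1 < j \/ j.+1 < k ->
  exists i' j' k', [/\ T i' j' k', i <= i', k' <= k & (i < i') || (k' < k)].
Proof.
move=> Tijk gap; have [hi hij hjk hk] := tilingT.1 i j k Tijk.
case: gap => [hj | hk'].
  have /orP[T' | T'] : T i i.+1 j || T i.+1 j k.
    by apply: tiling_stick_end; rewrite ?Tijk ?orbT.
  by exists i, i.+1, j; split=> //; lia.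
  by exists i.+1, j, k; split=> //; lia.
have /orP[T' | T'] : T i j j.+1 || T j j.+1 k.
  by apply: tiling_stick_end; rewrite ?Tijk.
by exists i, j, j.+1; split=> //; lia.
by exists j, j.+1, k; split=> //; lia.
Qed.

Lemma tiling_dense_triple i j k :
  T i j k -> exists l, [/\ i < l, l < k & T l.-1 l l.+1].
Proof.
have [w] := ubnP (k - i); elim: w i j k => // w IH i j k wk Tijk.
have [_ hij hjk _] := tilingT.1 i j k Tijk.
have [dense | gap] : (j = i.+1 /\ k = j.+1) \/ (i.+1 < j \/ j.+1 < k) by lia.
  by case: dense => jE kE; subst; exists i.+1; split.
have [i' [j' [k' [T' hi hk narrower]]]] := tiling_narrow Tijk gap.
have [|l [hil hlk Tl]] := IH i' j' k' _ T'; first by lia.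
by exists l; split => //; lia.
Qed.

End Tiling.

Theorem lemma4 (n : nat) (T : triple_set) :
  3 <= n -> tiling n T ->
  forall i j k, i < j -> j < k -> T i j k ->
  exists l, [/\ i < l, l < k & T l.-1 l l.+1].
Proof.
by move=> _ tilingT i j k _ _; apply: (tiling_dense_triple tilingT).
Qed.
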